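(* Let $p>1$, $\alpha\in\mathbb{R}$, let $\psi_1$ and $h$ be as defined below. Then, as $s\to+\infty$: (i) $\displaystyle\frac{1}{\ln(\psi_1^2(s)+2)}=\frac{p-1}{2s}+\frac{\alpha(p-1)\ln s}{2s^2}+O\!\left(\frac1{s^2}\right)$; (ii) $\displaystyle h(s)=\frac1{p-1}\left[1-\frac{\alpha}{s}-\frac{\alpha^2\ln s}{s^2}\right]+O\!\left(\frac1{s^2}\right)$.
   Context: For $T>0$ let $\psi$ be the unique positive solution of $\psi'=\psi^p\ln^\alpha(\psi^2+2)$ with $\psi(t)\to+\infty$ as $t\to T$; set $\psi_1(s)=\psi(T-e^{-s})$ and $h(s)=e^{-s}\psi_1^{p-1}(s)\ln^\alpha(\psi_1^2(s)+2)$. *)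

From Stdlib Require Import Reals Lra.
Open Scope R_scope.

Definition psi1 (psi : R -> R) (T s : R) : R := psi (T - exp (- s)).

Definition hfun (p alpha : R) (psi : R -> R) (T s : R) : R :=
  exp (- s) * Rpower (psi1 psi T s) (p - 1)
    * Rpower (ln (psi1 psi T s ^ 2 + 2)) alpha.

Definition bigO_infty (f g : R -> R) : Prop :=
  exists C M : R, forall s : R, M < s -> Rabs (f s) <= C * Rabs (g s).

(* Along the solution, T - t is the integral of 1 / F over [psi t, +oo), where
   F y = y^p ell(y)^alpha and ell y = ln (y^2 + 2).  Rather than evaluating it, we
   compare it with Phi_K y = y^(1-p) ell^(-alpha) (1/(p-1) + B/ell + K/ell^2),
   B = -2 alpha / (p-1)^2: for a suitable constant K the functions
   c |-> Phi_(+-K) (psi c) + c are monotone near T and tend to T, so that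
   Phi_(-K) (psi t) <= T - t <= Phi_K (psi t).  At t = T - e^(-s) this reads
   h(s) = 1/(p-1) + B/ell + O(1/ell^2) with ell = ell(psi_1 s).  Taking logarithms,
   s = (p-1)/2 ell + alpha ln ell + ln (p-1) + O(1/ell); inverting this relation
   gives (i), and substituting (i) into the expansion of h gives (ii). *)

From Stdlib Require Import Reals Lra.
From Coquelicot Require Import Coquelicot.
Open Scope R_scope.

Lemma exp_le_exp x y : x <= y -> exp x <= exp y.
Proof. intros [lt | ->]; [left; apply exp_increasing, lt | right; reflexivity]. Qed.

Lemma ln_le_sub1 x : 0 < x -> ln x <= x - 1.
Proof. intros hx. pose proof (exp_ineq1_le (ln x)) as h. rewrite exp_ln in h; lra. Qed.

Lemma ln_le_affine c x : 0 < c -> 0 < x -> ln x <= c * x - ln c.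
Proof.
  intros hc hx. pose proof (ln_le_sub1 (c * x) ltac:(nra)) as h.
  rewrite ln_mult in h by lra. lra.
Qed.

Lemma sqr_le_4exp v : 0 <= v -> v ^ 2 <= 4 * exp v.
Proof.
  intros hv. pose proof (exp_ineq1_le (v / 2)) as h.
  replace v with (v / 2 + v / 2) at 2 by field. rewrite exp_plus. nra.
Qed.

Lemma Rabs_ln_sub_le x y : 0 < y -> y / 2 <= x -> Rabs (ln x - ln y) <= 2 / y * Rabs (x - y).
Proof.
  intros hy hx. apply Rabs_le_between.
  pose proof (ln_le_sub1 (x / y) ltac:(apply Rdiv_lt_0_compat; lra)) as hxy.
  pose proof (ln_le_sub1 (y / x) ltac:(apply Rdiv_lt_0_compat; lra)) as hyx.
  rewrite ln_div in hxy, hyx by lra.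
  pose proof (Rle_abs (x - y)) as hxy_abs. pose proof (Rle_abs (y - x)) as hyx_abs.
  rewrite Rabs_minus_sym in hyx_abs.
  assert (y / x - 1 <= 2 / y * Rabs (x - y)).
  { apply Rmult_le_reg_r with (x * y); [nra|].
    replace ((y / x - 1) * (x * y)) with ((y - x) * y) by (field; lra).
    replace (2 / y * Rabs (x - y) * (x * y)) with (2 * x * Rabs (x - y)) by (field; lra).
    nra. }
  assert (x / y - 1 <= 2 / y * Rabs (x - y)).
  { replace (x / y - 1) with ((x - y) / y) by (field; lra).
    unfold Rdiv. pose proof (Rinv_0_lt_compat y hy). nra. }
  lra.
Qed.

Lemma Rabs_ln_le_between x m M : 0 < m -> m <= x <= M -> Rabs (ln x) <= Rmax (ln M) (- ln m).
Proof.
  intros hm hx. apply Rabs_le_between_Rmax. split; apply ln_le; lra.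
Qed.

Lemma log_dominated a b c : 0 < a -> 0 <= b ->
  exists L1, 1 <= L1 /\ forall L, L1 <= L -> b * ln L + c <= a * L.
Proof.
  intros ha hb. set (k := a / (2 * (b + 1))).
  assert (hk : 0 < k) by (apply Rdiv_lt_0_compat; lra).
  assert (hbk : b * k <= a / 2).
  { unfold k. apply Rmult_le_reg_r with (2 * (b + 1)); [lra|]. field_simplify; nra. }
  exists (Rmax 1 (2 * (b * Rabs (ln k) + Rabs c) / a)). split; [apply Rmax_l|].
  intros L hL. pose proof (Rmax_l 1 (2 * (b * Rabs (ln k) + Rabs c) / a)).
  pose proof (Rmax_r 1 (2 * (b * Rabs (ln k) + Rabs c) / a)).
  assert (hlin : b * ln L <= b * (k * L - ln k)) by (apply Rmult_le_compat_l, ln_le_affine; lra).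
  assert (b * - ln k <= b * Rabs (ln k)) by (apply Rmult_le_compat_l; [lra | rewrite <- Rabs_Ropp; apply Rle_abs]).
  assert (b * Rabs (ln k) + Rabs c <= a / 2 * L).
  { apply Rmult_le_reg_r with (2 / a); [apply Rdiv_lt_0_compat; lra|].
    replace (a / 2 * L * (2 / a)) with L by (field; lra). unfold Rdiv in *. lra. }
  pose proof (Rle_abs c). nra.
Qed.

Lemma sqr_div_le_of_log_bound x a b L : 1 <= L -> 0 <= a -> 0 <= b ->
  Rabs x <= a * ln L + b -> x ^ 2 / L <= 8 * a ^ 2 + 2 * b ^ 2.
Proof.
  intros hL ha hb hx.
  assert (hlnL : 0 <= ln L) by (rewrite <- ln_1; apply ln_le; lra).
  assert (hsq : ln L ^ 2 <= 4 * L) by (rewrite <- (exp_ln L) at 2 by lra; apply sqr_le_4exp, hlnL).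
  assert (hx2 : x ^ 2 <= (a * ln L + b) ^ 2)
    by (rewrite <- pow2_abs; apply pow_incr; split; [apply Rabs_pos | exact hx]).
  apply Rmult_le_reg_r with L; [lra|]. unfold Rdiv. rewrite Rmult_assoc, Rinv_l, Rmult_1_r by lra.
  pose proof (pow2_ge_0 (a * ln L - b)). nra.
Qed.

Lemma nonincreasing_of_derive f f' a b : a < b ->
  (forall c, a <= c <= b -> derivable_pt_lim f c (f' c)) ->
  (forall c, a < c < b -> f' c <= 0) -> f b <= f a.
Proof.
  intros hab hd hs. destruct (MVT_cor2 f f' a b hab hd) as [c [E hc]].
  specialize (hs c hc). nra.
Qed.

Lemma nondecreasing_of_derive f f' a b : a < b ->
  (forall c, a <= c <= b -> derivable_pt_lim f c (f' c)) ->
  (forall c, a < c < b -> 0 <= f' c) -> f a <= f b.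
Proof.
  intros hab hd hs.
  enough (- f b <= - f a) by lra.
  apply (nonincreasing_of_derive (fun c => - f c) (fun c => - f' c) a b hab).
  - intros c hc. apply derivable_pt_lim_opp, hd, hc.
  - intros c hc. specialize (hs c hc). lra.
Qed.

Lemma le_of_nondecreasing_to g t T l : t < T ->
  (forall c, t < c < T -> g t <= g c) ->
  (forall eps, 0 < eps -> exists d, 0 < d /\ forall c, T - d < c < T -> Rabs (g c - l) <= eps) ->
  g t <= l.
Proof.
  intros htT hmono hlim. apply Rle_plus_epsilon. intros eps heps.
  destruct (hlim eps heps) as [d [hd hc]].
  set (c := T - Rmin d (T - t) / 2).
  assert (0 < Rmin d (T - t) <= T - t /\ Rmin d (T - t) <= d)
    by (split; [split; [apply Rmin_pos | apply Rmin_r] | apply Rmin_l]; lra).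
  specialize (hmono c ltac:(unfold c; lra)). specialize (hc c ltac:(unfold c; lra)).
  apply Rabs_le_between' in hc. lra.
Qed.

Lemma ge_of_nonincreasing_to g t T l : t < T ->
  (forall c, t < c < T -> g c <= g t) ->
  (forall eps, 0 < eps -> exists d, 0 < d /\ forall c, T - d < c < T -> Rabs (g c - l) <= eps) ->
  l <= g t.
Proof.
  intros htT hmono hlim.
  enough (- g t <= - l) by lra.
  apply (le_of_nondecreasing_to (fun c => - g c) t T (- l) htT).
  - intros c hc. specialize (hmono c hc). lra.
  - intros eps heps. destruct (hlim eps heps) as [d [hd hc]].
    exists d. split; [exact hd|]. intros c hc'.
    replace (- g c - - l) with (- (g c - l)) by ring. rewrite Rabs_Ropp. apply hc, hc'.
Qed.

Lemma log_inversion a b c M : 0 < a -> 0 <= M -> exists C, forall L r s,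
  1 <= L -> Rabs r <= M / L -> s = a * L + b * ln L + c + r ->
  Rabs b * ln L + Rabs c + M <= a * L / 2 ->
  a * L / 2 <= s <= 3 * a * L / 2 /\ Rabs (s ^ 2 / L - a * s - b * a * ln s) <= C.
Proof.
  intros ha hM.
  exists (a * Rabs b * Rmax (ln (3 * a / 2)) (- ln (a / 2)) + a * Rabs c + a * M
          + (8 * b ^ 2 + 2 * (Rabs c + M) ^ 2)).
  intros L r s hL hr hs hlarge.
  assert (hlnL : 0 <= ln L) by (rewrite <- ln_1; apply ln_le; lra).
  assert (hrM : Rabs r <= M).
  { eapply Rle_trans; [exact hr|]. apply Rmult_le_reg_r with L; [lra|].
    unfold Rdiv. rewrite Rmult_assoc, Rinv_l by lra. nra. }
  set (D := b * ln L + c + r).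
  assert (hD : Rabs D <= Rabs b * ln L + (Rabs c + M)).
  { unfold D. eapply Rle_trans; [apply Rabs_triang|].
    eapply Rle_trans; [apply Rplus_le_compat_r, Rabs_triang|].
    rewrite Rabs_mult, (Rabs_right (ln L)) by lra. lra. }
  apply Rabs_le_between in hD.
  assert (hsb : a * L / 2 <= s <= 3 * a * L / 2) by (unfold D in *; lra).
  split; [exact hsb|].
  (* With s = a L + D, the terms a^2 L cancel and only a D + D^2 / L survives. *)
  assert (hid : s ^ 2 / L - a * s - b * a * ln s
                = - (a * b * ln (s / L)) + a * c + a * r + D ^ 2 / L).
  { rewrite ln_div by nra. replace s with (a * L + D) by (unfold D; lra). unfold D. field. lra. }
  assert (hq : Rabs (ln (s / L)) <= Rmax (ln (3 * a / 2)) (- ln (a / 2))).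
  { apply Rabs_ln_le_between; [lra|].
    split; apply Rmult_le_reg_r with L; try lra;
      replace (s / L * L) with s by (field; lra); lra. }
  assert (hD2 : D ^ 2 / L <= 8 * b ^ 2 + 2 * (Rabs c + M) ^ 2).
  { rewrite <- (pow2_abs b). apply sqr_div_le_of_log_bound; try assumption.
    - apply Rabs_pos.
    - pose proof (Rabs_pos c). lra.
    - apply Rabs_le_between. lra. }
  assert (hD20 : 0 <= D ^ 2 / L) by (apply Rdiv_le_0_compat; [apply pow2_ge_0 | lra]).
  assert (hab : 0 <= a * Rabs b) by (apply Rmult_le_pos; [lra | apply Rabs_pos]).
  rewrite hid. eapply Rle_trans; [apply Rabs_4|].
  rewrite Rabs_Ropp, !Rabs_mult, (Rabs_right a), (Rabs_right (D ^ 2 / L)) by lra.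
  apply Rmult_le_compat_l with (r := a * Rabs b) in hq; [|exact hab].
  apply Rmult_le_compat_l with (r := a) in hrM; [|lra].
  lra.
Qed.

Definition ell y := ln (y ^ 2 + 2).

Lemma ell_pos y : 0 < ell y.
Proof. unfold ell. rewrite <- ln_1. apply ln_increasing; nra. Qed.

Lemma ell_le x y : 0 < x <= y -> ell x <= ell y.
Proof. intros h. unfold ell. apply ln_le; nra. Qed.

Lemma ell_ge_of_exp_le L y : exp L <= y -> L <= ell y.
Proof.
  intros h. pose proof (exp_pos L). unfold ell.
  rewrite <- (ln_exp L). apply ln_le; nra.
Qed.

Lemma exp_ell y : exp (ell y) = y ^ 2 + 2.
Proof. unfold ell. apply exp_ln. nra. Qed.

Lemma ell_derive y : is_derive ell y (2 * y / (y ^ 2 + 2)).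
Proof. unfold ell. auto_derive; [nra | field; nra]. Qed.

Lemma ell_sub_2ln y : 0 < y -> 0 <= ell y - 2 * ln y <= 2 / y ^ 2.
Proof.
  intros hy.
  assert (e : ell y - 2 * ln y = ln ((y ^ 2 + 2) / y ^ 2)).
  { unfold ell. rewrite ln_div, ln_pow by nra. simpl. ring. }
  rewrite e. split.
  - rewrite <- ln_1. apply ln_le; [lra|].
    apply Rmult_le_reg_r with (y ^ 2); [nra|]. field_simplify; nra.
  - eapply Rle_trans; [apply ln_le_sub1, Rdiv_lt_0_compat; nra|].
    right. field. lra.
Qed.

Lemma ell_sub_2ln_le_inv y : 0 < y -> 2 <= ell y -> 0 <= ell y - 2 * ln y <= 4 / ell y.
Proof.
  intros hy hL. pose proof (ell_sub_2ln y hy) as [h0 h1]. split; [exact h0|].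
  assert (hy2 : 1 <= y ^ 2).
  { pose proof (exp_ineq1_le 2). apply exp_le_exp in hL. rewrite exp_ell in hL. lra. }
  assert (hLy : ell y <= 2 * y ^ 2) by (pose proof (ln_le_sub1 (y ^ 2 + 2)); unfold ell; nra).
  eapply Rle_trans; [exact h1|].
  apply Rmult_le_reg_r with (y ^ 2 * ell y); [nra|].
  field_simplify; lra.
Qed.

Lemma ell_ge_1 y : 1 <= y -> 1 <= ell y.
Proof.
  intros hy. rewrite <- (ln_exp 1). unfold ell.
  apply ln_le; [apply exp_pos|]. pose proof exp_le_3. nra.
Qed.

Lemma ell_le_2ln y : 1 <= y -> ell y <= 2 * ln y + 2.
Proof.
  intros hy. pose proof (ell_sub_2ln y ltac:(lra)) as [_ h].
  assert (2 / y ^ 2 <= 2).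
  { apply Rmult_le_reg_r with (y ^ 2); [nra|]. field_simplify; nra. }
  lra.
Qed.

Section Asymptotics.

Variables (p alpha : R).
Hypothesis hp : 1 < p.

Local Notation B := (-2 * alpha / (p - 1) ^ 2).

Definition rhs y := Rpower y p * Rpower (ell y) alpha.

Definition gauge y := exp ((1 - p) * ln y - alpha * ln (ell y)).

Definition corr K L := / (p - 1) + B / L + K / L ^ 2.

Definition Phi K y := gauge y * corr K (ell y).

(* The derivative of [c |-> Phi K (psi c) + c] along the solution, see [flow_derive]. *)
Definition slope K y :=
  let L := ell y in let k := 2 * y ^ 2 / (y ^ 2 + 2) in
  (alpha / (p - 1) * (2 - k) * L ^ 2 - ((p - 1) * K + (alpha + 1) * k * B) * L
   - (alpha + 2) * k * K) / L ^ 3.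

(* [(p - 1) * Kc] exceeds every value of the coefficient [(alpha + 1) * k * B], so
   the term [- (p - 1) * K * L] decides the sign of [slope (+- Kc)]. *)
Definition Kc := (2 * Rabs (alpha + 1) * Rabs B + 1) / (p - 1).

Definition L_slope := 16 * Rabs alpha / (p - 1) + 2 * Rabs (alpha + 2) * Kc + 1.

Lemma rhs_pos y : 0 < rhs y.
Proof. apply Rmult_lt_0_compat; apply exp_pos. Qed.

Lemma gauge_mul_rhs y : 0 < y -> gauge y * rhs y = y.
Proof.
  intros hy. unfold gauge, rhs, Rpower. rewrite <- !exp_plus.
  replace (_ + _) with (ln y) by ring. apply exp_ln, hy.
Qed.

Lemma Phi_derive K y : 0 < y ->
  derivable_pt_lim (Phi K) y ((slope K y - 1) / rhs y).
Proof.
  intros hy. pose proof (ell_pos y) as hL. pose proof (rhs_pos y) as hF.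
  pose proof (gauge_mul_rhs y hy) as hgF.
  apply is_derive_Reals. unfold Phi, gauge, corr.
  assert (hdL : ex_derive ell y) by (eexists; apply ell_derive).
  auto_derive; [repeat split; auto; nra |].
  replace (Derive (fun x => ell x) y) with (2 * y / (y ^ 2 + 2))
    by (symmetry; apply is_derive_unique, ell_derive).
  replace (exp _) with (gauge y) by (unfold gauge; f_equal; ring).
  replace (gauge y) with (y / rhs y)
    by (apply (Rmult_eq_reg_r (rhs y)); [rewrite hgF; field |]; lra).
  unfold slope. set (L := ell y) in *.
  field. repeat split; nra.
Qed.

Lemma Kc_nonneg : 0 <= Kc.
Proof.
  unfold Kc. apply Rdiv_le_0_compat; [|lra].
  pose proof (Rabs_pos (alpha + 1)). pose proof (Rabs_pos B). nra.
Qed.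

Lemma slope_sign y : 0 < y -> L_slope <= ell y -> slope Kc y <= 0 /\ 0 <= slope (- Kc) y.
Proof.
  intros hy hL. pose proof Kc_nonneg as hK0.
  assert (hKc : (p - 1) * Kc = 2 * Rabs (alpha + 1) * Rabs B + 1) by (unfold Kc; field; lra).
  unfold slope. set (L := ell y) in *. set (k := 2 * y ^ 2 / (y ^ 2 + 2)).
  assert (hk : 0 <= k <= 2).
  { unfold k. split; [apply Rdiv_le_0_compat; nra|].
    apply Rmult_le_reg_r with (y ^ 2 + 2); [nra|]. field_simplify; nra. }
  assert (he : 0 <= (2 - k) * L ^ 2 <= 16).
  { replace (2 - k) with (4 / (y ^ 2 + 2)) by (unfold k; field; nra).
    pose proof (sqr_le_4exp L (Rlt_le _ _ (ell_pos y))) as hsq.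
    unfold L in hsq. rewrite exp_ell in hsq. fold L in hsq.
    assert (0 <= 4 / (y ^ 2 + 2)) by (apply Rdiv_le_0_compat; nra).
    split; [apply Rmult_le_pos; nra|].
    apply Rle_trans with (4 / (y ^ 2 + 2) * (4 * (y ^ 2 + 2))).
    - apply Rmult_le_compat_l; assumption.
    - right. field. nra. }
  assert (h1 : Rabs (alpha / (p - 1) * (2 - k) * L ^ 2) <= 16 * Rabs alpha / (p - 1)).
  { rewrite Rmult_assoc, Rabs_mult, Rabs_div, (Rabs_right (p - 1)), (Rabs_right ((2 - k) * L ^ 2)) by lra.
    replace (16 * Rabs alpha / (p - 1)) with (Rabs alpha / (p - 1) * 16) by (field; lra).
    apply Rmult_le_compat_l; [apply Rdiv_le_0_compat; [apply Rabs_pos | lra] | lra]. }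
  assert (h2 : Rabs ((alpha + 1) * k * B) <= 2 * Rabs (alpha + 1) * Rabs B).
  { rewrite !Rabs_mult, (Rabs_right k) by lra.
    pose proof (Rmult_le_pos _ _ (Rabs_pos (alpha + 1)) (Rabs_pos B)). nra. }
  assert (h3 : Rabs ((alpha + 2) * k * Kc) <= 2 * Rabs (alpha + 2) * Kc).
  { rewrite !Rabs_mult, (Rabs_right k), (Rabs_right Kc) by lra.
    pose proof (Rmult_le_pos _ _ (Rabs_pos (alpha + 2)) hK0). nra. }
  apply Rabs_le_between in h1, h2, h3.
  assert (hL1 : 1 <= L).
  { unfold L_slope in hL. pose proof (Rabs_pos alpha). pose proof (Rabs_pos (alpha + 2)).
    assert (0 <= 16 * Rabs alpha / (p - 1)) by (apply Rdiv_le_0_compat; lra). nra. }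
  assert (hL3 : 0 < L ^ 3) by (apply pow_lt; lra).
  pose proof (Rinv_0_lt_compat _ hL3). unfold L_slope in hL. unfold Rdiv. split.
  - apply Rmult_le_0_r; [nra | lra].
  - apply Rmult_le_pos; [nra | lra].
Qed.

Lemma gauge_le_pow : exists C, forall y, 1 <= y -> gauge y <= exp ((1 - p) / 2 * ln y + C).
Proof.
  set (c := (p - 1) / (4 * (Rabs alpha + 1))).
  assert (hc : 0 < c) by (apply Rdiv_lt_0_compat; pose proof (Rabs_pos alpha); lra).
  assert (hac : Rabs alpha * c <= (p - 1) / 4).
  { unfold c. apply Rmult_le_reg_r with (4 * (Rabs alpha + 1)); [pose proof (Rabs_pos alpha); lra|].
    field_simplify; [|pose proof (Rabs_pos alpha); lra]. pose proof (Rabs_pos alpha). nra. }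
  exists (Rabs alpha * (2 * c - ln c)). intros y hy.
  apply exp_le_exp.
  pose proof (ell_ge_1 y hy) as hL1. pose proof (ell_le_2ln y hy) as hL2.
  assert (hlnL : 0 <= ln (ell y)) by (rewrite <- ln_1; apply ln_le; lra).
  assert (hlny : 0 <= ln y) by (rewrite <- ln_1; apply ln_le; lra).
  pose proof (ln_le_affine c (ell y) hc ltac:(lra)) as hlin.
  assert (- alpha * ln (ell y) <= Rabs alpha * ln (ell y)).
  { apply Rmult_le_compat_r; [lra|]. rewrite <- Rabs_Ropp. apply Rle_abs. }
  assert (Rabs alpha * ln (ell y) <= Rabs alpha * (c * (2 * ln y + 2) - ln c)).
  { apply Rmult_le_compat_l; [apply Rabs_pos | nra]. }
  nra.
Qed.

Lemma gauge_vanishes eps : 0 < eps -> exists Y, forall y, Y <= y -> gauge y <= eps.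
Proof.
  intros heps. destruct gauge_le_pow as [C hC].
  set (W := Rmax 0 (2 * (C - ln eps) / (p - 1))).
  exists (exp W). intros y hy.
  assert (hy1 : 1 <= y) by (rewrite <- exp_0; eapply Rle_trans; [apply exp_le_exp, Rmax_l | exact hy]).
  assert (hW : W <= ln y) by (rewrite <- (ln_exp W); apply ln_le; [apply exp_pos | exact hy]).
  eapply Rle_trans; [apply hC, hy1|].
  rewrite <- (exp_ln eps heps). apply exp_le_exp.
  assert (hy' : 2 * (C - ln eps) / (p - 1) <= ln y) by (eapply Rle_trans; [apply Rmax_r | exact hW]).
  apply Rmult_le_compat_l with (r := (p - 1) / 2) in hy'; [|lra].
  replace ((p - 1) / 2 * (2 * (C - ln eps) / (p - 1))) with (C - ln eps) in hy' by (field; lra).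
  lra.
Qed.

Lemma corr_bound K L : 1 <= L -> Rabs (corr K L) <= / (p - 1) + Rabs B + Rabs K.
Proof.
  intros hL. unfold corr.
  assert (hL2 : 1 <= L ^ 2) by nra.
  eapply Rle_trans; [apply Rabs_triang|]. apply Rplus_le_compat.
  - eapply Rle_trans; [apply Rabs_triang|].
    rewrite Rabs_right by (left; apply Rinv_0_lt_compat; lra).
    apply Rplus_le_compat_l. unfold Rdiv. rewrite Rabs_mult, Rabs_inv, (Rabs_right L) by lra.
    rewrite <- (Rmult_1_r (Rabs B)) at 2. apply Rmult_le_compat_l; [apply Rabs_pos|].
    rewrite <- Rinv_1. apply Rinv_le_contravar; lra.
  - unfold Rdiv. rewrite Rabs_mult, Rabs_inv, (Rabs_right (L ^ 2)) by lra.
    rewrite <- (Rmult_1_r (Rabs K)) at 2. apply Rmult_le_compat_l; [apply Rabs_pos|].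
    rewrite <- Rinv_1. apply Rinv_le_contravar; lra.
Qed.

Definition Rc := 2 * (p - 1) * (1 + Rabs B + Kc).

Lemma log_theta_decomposition y theta s : 0 < y -> 2 <= ell y ->
  2 * (p - 1) * (Rabs B + Kc) <= ell y ->
  Rabs (theta - / (p - 1) - B / ell y) <= Kc / ell y ^ 2 ->
  s = (p - 1) * ln y + alpha * ln (ell y) - ln theta ->
  Rabs (s - ((p - 1) / 2 * ell y + alpha * ln (ell y) + ln (p - 1))) <= Rc / ell y.
Proof.
  intros hy hL2 hLB htheta hs. pose proof Kc_nonneg.
  pose proof (ell_sub_2ln_le_inv y hy hL2) as h2ln. set (L := ell y) in *.
  assert (hinv : 0 < / L) by (apply Rinv_0_lt_compat; lra).
  assert (hdev : Rabs (theta - / (p - 1)) <= (Rabs B + Kc) / L).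
  { replace (theta - / (p - 1)) with (theta - / (p - 1) - B / L + B / L) by ring.
    eapply Rle_trans; [apply Rabs_triang|].
    unfold Rdiv. rewrite Rabs_mult, (Rabs_right (/ L)) by lra.
    assert (Kc / L ^ 2 <= Kc / L).
    { apply Rmult_le_compat_l; [lra|]. apply Rinv_le_contravar; nra. }
    unfold Rdiv in *. lra. }
  assert (hdev2 : (Rabs B + Kc) / L <= / (p - 1) / 2).
  { apply Rmult_le_reg_r with (2 * (p - 1) * L); [nra|]. field_simplify; lra. }
  assert (htheta0 : / (p - 1) / 2 <= theta).
  { apply Rabs_le_between' in hdev. lra. }
  pose proof (Rabs_ln_sub_le theta (/ (p - 1)) ltac:(apply Rinv_0_lt_compat; lra) htheta0) as hln.
  rewrite ln_Rinv in hln by lra.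
  replace (2 / / (p - 1)) with (2 * (p - 1)) in hln by (field; lra).
  replace (s - ((p - 1) / 2 * L + alpha * ln L + ln (p - 1)))
    with ((p - 1) / 2 * (2 * ln y - L) - (ln theta - - ln (p - 1))) by (rewrite hs; field).
  eapply Rle_trans; [apply Rabs_triang|].
  rewrite Rabs_Ropp, Rabs_mult, (Rabs_right ((p - 1) / 2)) by lra.
  rewrite Rabs_minus_sym. rewrite Rabs_right by lra.
  destruct h2ln as [_ h2ln]. apply Rmult_le_compat_l with (r := (p - 1) / 2) in h2ln; [|lra].
  apply Rmult_le_compat_l with (r := 2 * (p - 1)) in hdev; [|lra].
  unfold Rc. unfold Rdiv in *. lra.
Qed.

Lemma theta_expansion L theta s C : 1 <= L ->
  Rabs (theta - / (p - 1) - B / L) <= Kc / L ^ 2 ->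
  (p - 1) / 2 * L / 2 <= s <= 3 * ((p - 1) / 2) * L / 2 ->
  Rabs (s ^ 2 / L - (p - 1) / 2 * s - alpha * ((p - 1) / 2) * ln s) <= C ->
  Rabs (/ L - ((p - 1) / (2 * s) + alpha * (p - 1) * ln s / (2 * s ^ 2))) <= C / s ^ 2 /\
  Rabs (theta - / (p - 1) * (1 - alpha / s - alpha ^ 2 * ln s / s ^ 2))
    <= (9 * ((p - 1) / 2) ^ 2 / 4 * Kc + Rabs B * C) / s ^ 2.
Proof.
  intros hL htheta hs hC. pose proof Kc_nonneg.
  assert (hs0 : 0 < s) by nra.
  assert (hs2 : 0 < s ^ 2) by nra.
  assert (hi : Rabs (/ L - ((p - 1) / (2 * s) + alpha * (p - 1) * ln s / (2 * s ^ 2))) <= C / s ^ 2).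
  { replace (/ L - _) with ((s ^ 2 / L - (p - 1) / 2 * s - alpha * ((p - 1) / 2) * ln s) / s ^ 2)
      by (field; lra).
    rewrite Rabs_div, (Rabs_right (s ^ 2)) by lra.
    apply Rmult_le_compat_r; [left; apply Rinv_0_lt_compat|]; lra. }
  split; [exact hi|].
  assert (hKL : Kc / L ^ 2 <= 9 * ((p - 1) / 2) ^ 2 / 4 * Kc / s ^ 2).
  { assert (hsL : s ^ 2 <= 9 * ((p - 1) / 2) ^ 2 / 4 * L ^ 2) by nra.
    apply Rmult_le_reg_r with (L ^ 2 * s ^ 2); [apply Rmult_lt_0_compat; nra|].
    field_simplify; [|lra|lra]. nra. }
  replace (theta - _) with ((theta - / (p - 1) - B / L)
    + B * (/ L - ((p - 1) / (2 * s) + alpha * (p - 1) * ln s / (2 * s ^ 2)))) by (field; lra).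
  eapply Rle_trans; [apply Rabs_triang|]. rewrite Rabs_mult.
  apply Rmult_le_compat_l with (r := Rabs B) in hi; [|apply Rabs_pos].
  unfold Rdiv in *. lra.
Qed.

Lemma gauge_pos y : 0 < gauge y.
Proof. apply exp_pos. Qed.

Lemma hfun_eq psi T s : hfun p alpha psi T s = exp (- s) / gauge (psi1 psi T s).
Proof.
  unfold hfun, gauge, Rpower, Rdiv. rewrite <- exp_Ropp, Rmult_assoc, <- exp_plus.
  f_equal. f_equal. unfold ell. f_equal. ring.
Qed.

Lemma ln_theta_eq y s : s = (p - 1) * ln y + alpha * ln (ell y) - ln (exp (- s) / gauge y).
Proof. rewrite ln_div by apply exp_pos. unfold gauge. rewrite !ln_exp. ring. Qed.

Lemma theta_sandwich y s : Phi (- Kc) y <= exp (- s) <= Phi Kc y ->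
  Rabs (exp (- s) / gauge y - / (p - 1) - B / ell y) <= Kc / ell y ^ 2.
Proof.
  intros hsand. unfold Phi in hsand. pose proof (gauge_pos y) as hg.
  assert (corr (- Kc) (ell y) <= exp (- s) / gauge y <= corr Kc (ell y)) as [hlo hhi].
  { split; apply Rmult_le_reg_r with (gauge y); try lra;
      replace (exp (- s) / gauge y * gauge y) with (exp (- s)) by (field; lra); lra. }
  apply Rabs_le_between. unfold corr, Rdiv in *. lra.
Qed.

Lemma expansions_of_sandwich : exists L1 C1 C2, L_slope <= L1 /\ forall y s, 0 < y -> L1 <= ell y ->
  Phi (- Kc) y <= exp (- s) <= Phi Kc y ->
  Rabs (/ ell y - ((p - 1) / (2 * s) + alpha * (p - 1) * ln s / (2 * s ^ 2))) <= C1 / s ^ 2 /\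
  Rabs (exp (- s) / gauge y - / (p - 1) * (1 - alpha / s - alpha ^ 2 * ln s / s ^ 2)) <= C2 / s ^ 2.
Proof.
  pose proof Kc_nonneg.
  assert (hRc : 0 <= Rc) by (unfold Rc; pose proof (Rabs_pos B); nra).
  destruct (log_dominated ((p - 1) / 4) (Rabs alpha) (Rabs (ln (p - 1)) + Rc))
    as [L2 [hL2 hdom]]; [lra | apply Rabs_pos |].
  destruct (log_inversion ((p - 1) / 2) alpha (ln (p - 1)) Rc) as [C hC]; [lra | exact hRc |].
  set (L1 := Rmax (Rmax 2 L_slope) (Rmax (2 * (p - 1) * (Rabs B + Kc)) L2)).
  assert (hL1 : 2 <= L1 /\ L_slope <= L1 /\ 2 * (p - 1) * (Rabs B + Kc) <= L1 /\ L2 <= L1).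
  { unfold L1. pose proof (Rmax_l 2 L_slope). pose proof (Rmax_r 2 L_slope).
    pose proof (Rmax_l (2 * (p - 1) * (Rabs B + Kc)) L2).
    pose proof (Rmax_r (2 * (p - 1) * (Rabs B + Kc)) L2).
    pose proof (Rmax_l (Rmax 2 L_slope) (Rmax (2 * (p - 1) * (Rabs B + Kc)) L2)).
    pose proof (Rmax_r (Rmax 2 L_slope) (Rmax (2 * (p - 1) * (Rabs B + Kc)) L2)). lra. }
  exists L1, C, (9 * ((p - 1) / 2) ^ 2 / 4 * Kc + Rabs B * C).
  split; [apply hL1|]. intros y s hy hL hsand.
  pose proof (theta_sandwich y s hsand) as htheta.
  pose proof (log_theta_decomposition y _ s hy ltac:(lra) ltac:(lra) htheta (ln_theta_eq y s)) as hr.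
  destruct (hC (ell y) _ s ltac:(lra) hr ltac:(ring)) as [hsb hCb].
  { specialize (hdom (ell y) ltac:(lra)). lra. }
  apply theta_expansion; [lra | exact htheta | exact hsb | exact hCb].
Qed.

Section Blowup.

Variables (T t0 : R) (psi : R -> R).
Hypothesis ht0 : t0 < T.
Hypothesis hpos : forall t, t0 < t < T -> 0 < psi t.
Hypothesis hderiv : forall t, t0 < t < T -> derivable_pt_lim psi t (rhs (psi t)).
Hypothesis hblow : forall M, exists d, 0 < d /\ forall t, T - d < t < T -> M < psi t.

Lemma psi_increasing a b : t0 < a -> a < b -> b < T -> psi a < psi b.
Proof.
  intros ha hab hb.
  destruct (MVT_cor2 psi (fun t => rhs (psi t)) a b hab) as [c [E hc]].
  - intros c hc. apply hderiv. lra.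
  - pose proof (rhs_pos (psi c)). nra.
Qed.

Lemma flow_derive K c : t0 < c < T ->
  derivable_pt_lim (fun c => Phi K (psi c) + c) c (slope K (psi c)).
Proof.
  intros hc. pose proof (rhs_pos (psi c)).
  replace (slope K (psi c)) with ((slope K (psi c) - 1) / rhs (psi c) * rhs (psi c) + 1)
    by (field; lra).
  apply derivable_pt_lim_plus; [|apply derivable_pt_lim_id].
  apply (derivable_pt_lim_comp psi (Phi K)); [apply hderiv, hc|].
  apply Phi_derive, hpos, hc.
Qed.

Lemma flow_tends_to_T K : forall eps, 0 < eps -> exists d, 0 < d /\
  forall c, T - d < c < T -> Rabs (Phi K (psi c) + c - T) <= eps.
Proof.
  intros eps heps.
  set (M := / (p - 1) + Rabs B + Rabs K).
  assert (hM : 0 < M) by (pose proof (Rinv_0_lt_compat (p - 1) ltac:(lra));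
    pose proof (Rabs_pos B); pose proof (Rabs_pos K); unfold M; lra).
  destruct (gauge_vanishes (eps / 2 / M) ltac:(apply Rdiv_lt_0_compat; lra)) as [Y hY].
  destruct (hblow (Rmax 1 Y)) as [d [hd hnear]].
  exists (Rmin d (Rmin (eps / 2) (T - t0))). split.
  { apply Rmin_pos; [lra | apply Rmin_pos; lra]. }
  intros c hc.
  pose proof (Rmin_l d (Rmin (eps / 2) (T - t0))).
  pose proof (Rmin_r d (Rmin (eps / 2) (T - t0))).
  pose proof (Rmin_l (eps / 2) (T - t0)). pose proof (Rmin_r (eps / 2) (T - t0)).
  specialize (hnear c ltac:(lra)).
  pose proof (Rmax_l 1 Y). pose proof (Rmax_r 1 Y).
  assert (hg : gauge (psi c) <= eps / 2 / M) by (apply hY; lra).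
  pose proof (corr_bound K (ell (psi c)) (ell_ge_1 (psi c) ltac:(lra))) as hcorr.
  assert (hPhi : Rabs (Phi K (psi c)) <= eps / 2).
  { unfold Phi. rewrite Rabs_mult, (Rabs_right (gauge (psi c))) by (left; apply exp_pos).
    replace (eps / 2) with (eps / 2 / M * M) by (field; lra).
    apply Rmult_le_compat; [left; apply exp_pos | apply Rabs_pos | exact hg | exact hcorr]. }
  replace (Phi K (psi c) + c - T) with (Phi K (psi c) + (c - T)) by ring.
  eapply Rle_trans; [apply Rabs_triang|]. rewrite (Rabs_left (c - T)) by lra. lra.
Qed.

Lemma tail_comparison t : t0 < t < T -> L_slope <= ell (psi t) ->
  Phi (- Kc) (psi t) <= T - t <= Phi Kc (psi t).
Proof.
  intros ht hL.
  assert (hslope : forall c, t <= c < T -> slope Kc (psi c) <= 0 /\ 0 <= slope (- Kc) (psi c)).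
  { intros c hc. apply slope_sign; [apply hpos; lra|].
    eapply Rle_trans; [exact hL|]. apply ell_le. split; [apply hpos; lra|].
    destruct (Req_dec c t) as [-> | hne]; [lra|]. left. apply psi_increasing; lra. }
  split.
  - enough (Phi (- Kc) (psi t) + t <= T) by lra.
    apply (le_of_nondecreasing_to (fun c => Phi (- Kc) (psi c) + c) t T T); [lra | | apply flow_tends_to_T].
    intros c hc. apply (nondecreasing_of_derive (fun c => Phi (- Kc) (psi c) + c)
      (fun c => slope (- Kc) (psi c)) t c); [lra | |].
    + intros c' hc'. apply flow_derive. lra.
    + intros c' hc'. apply hslope. lra.
  - enough (T <= Phi Kc (psi t) + t) by lra.
    apply (ge_of_nonincreasing_to (fun c => Phi Kc (psi c) + c) t T T); [lra | | apply flow_tends_to_T].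
    intros c hc. apply (nonincreasing_of_derive (fun c => Phi Kc (psi c) + c)
      (fun c => slope Kc (psi c)) t c); [lra | |].
    + intros c' hc'. apply flow_derive. lra.
    + intros c' hc'. apply hslope. lra.
Qed.

Lemma sandwich_eventually L1 : L_slope <= L1 -> exists M, 0 <= M /\ forall s, M < s ->
  0 < psi1 psi T s /\ L1 <= ell (psi1 psi T s) /\
  Phi (- Kc) (psi1 psi T s) <= exp (- s) <= Phi Kc (psi1 psi T s).
Proof.
  intros hL1. destruct (hblow (exp L1)) as [d [hd hnear]].
  set (m := Rmin d (T - t0)).
  assert (hm : 0 < m <= d /\ m <= T - t0)
    by (split; [split; [apply Rmin_pos | apply Rmin_l] | apply Rmin_r]; lra).
  exists (Rmax 0 (- ln m)). split; [apply Rmax_l|]. intros s hs.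
  assert (hes : exp (- s) < m).
  { rewrite <- (exp_ln m) by lra. apply exp_increasing.
    pose proof (Rmax_r 0 (- ln m)). lra. }
  pose proof (exp_pos (- s)).
  assert (ht : t0 < T - exp (- s) < T) by lra.
  assert (hL : L1 <= ell (psi1 psi T s))
    by (apply ell_ge_of_exp_le, Rlt_le, hnear; lra).
  pose proof (tail_comparison _ ht (Rle_trans _ _ _ hL1 hL)) as hcmp.
  replace (T - (T - exp (- s))) with (exp (- s)) in hcmp by ring.
  split; [apply hpos, ht | split; [exact hL | exact hcmp]].
Qed.

End Blowup.

End Asymptotics.

Theorem lemmaA5 (p alpha T t0 : R) (psi : R -> R) :
  1 < p -> 0 < T -> t0 < T ->
  (forall t, t0 < t < T -> 0 < psi t) ->
  (forall t, t0 < t < T ->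
     derivable_pt_lim psi t (Rpower (psi t) p * Rpower (ln (psi t ^ 2 + 2)) alpha)) ->
  (forall M, exists d, 0 < d /\ forall t, T - d < t < T -> M < psi t) ->
  bigO_infty
    (fun s => / ln (psi1 psi T s ^ 2 + 2)
              - ((p - 1) / (2 * s) + alpha * (p - 1) * ln s / (2 * s ^ 2)))
    (fun s => / s ^ 2)
  /\
  bigO_infty
    (fun s => hfun p alpha psi T s
              - / (p - 1) * (1 - alpha / s - alpha ^ 2 * ln s / s ^ 2))
    (fun s => / s ^ 2).
Proof.
  intros hp _ ht0 hpos hderiv hblow.
  destruct (expansions_of_sandwich p alpha hp) as [L1 [C1 [C2 [hL1 hexp]]]].
  destruct (sandwich_eventually p alpha hp T t0 psi ht0 hpos hderiv hblow L1 hL1)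
    as [M [hM hsand]].
  assert (hinv : forall s, M < s -> Rabs (/ s ^ 2) = / s ^ 2)
    by (intros s hs; apply Rabs_right, Rle_ge, Rlt_le, Rinv_0_lt_compat, pow_lt; lra).
  split; [exists C1, M | exists C2, M]; intros s hs; rewrite (hinv s hs);
    destruct (hsand s hs) as [hy [hL hcmp]].
  - exact (proj1 (hexp _ s hy hL hcmp)).
  - rewrite hfun_eq. exact (proj2 (hexp _ s hy hL hcmp)).
Qed.
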